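(* Let $g\le h$ and let $A$ be a tuple of $h$ self-adjoint complex matrices such that $\mathcal D_A\subseteq SM(\mathbb C)^h$ is bounded and $\mathcal D_A(2)$ is closed under entrywise complex conjugation. Then every Euclidean extreme point of the convex set $\mathcal P_g\mathcal D_A(1)\subseteq\mathbb R^g$ is a free extreme point of the matrix convex set $\mathcal P_g\mathcal D_A$.
   Context: For $A\in SM_d(\mathbb C)^h$, $\mathcal D_A=\bigcup_n\mathcal D_A(n)$, $\mathcal D_A(n)=\{X\in SM_n(\mathbb C)^h: I-\sum_iA_i\otimes X_i\succeq0\}$. For a set $K$ of $h$-tuples and $g\le h$, $\mathcal P_gK$ consists of all $X\in SM_n^g$ with $(X,Y)\in K$ for some $Y\in SM_n^{h-g}$; $\mathcal P_g\mathcal D_A(1)$ is its first level. A point $X\in K(n)$ is a free extreme point of a matrix convex set $K$ if whenever $X=\sum_iV_i^*X^{(i)}V_i$ with $X^{(i)}\in K$, $V_i\neq0$, $\sum_iV_i^*V_i=I$, each $X^{(i)}$ is unitarily equivalent to $X$ or to $X\oplus Z$ for some $Z\in K$. *)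

From mathcomp Require Import all_boot all_algebra.
From mathcomp Require Import complex mxtens reals.
Unset Strict Implicit. Unset Printing Implicit Defensive.
Import GRing.Theory Num.Theory.
Local Open Scope ring_scope.

Section Defs.
Variable R : realType.
Local Notation C := (R[i]).

Definition adj {p q : nat} (M : 'M[C]_(p, q)) : 'M[C]_(q, p) :=
  map_mx (@Num.conj C) M^T.

Definition herm {n : nat} (M : 'M[C]_n) : Prop := adj M = M.

Definition psd {n : nat} (M : 'M[C]_n) : Prop :=
  herm M /\ forall v : 'cV[C]_n, 0 <= (adj v *m M *m v) 0 0.

Definition sa_tuple {k n : nat} (X : 'I_k -> 'M[C]_n) : Prop :=
  forall i, herm (X i).

Definition LMIdom {h d : nat} (A : 'I_h -> 'M[C]_d) (n : nat)
    (X : 'I_h -> 'M[C]_n) : Prop :=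
  sa_tuple X /\ psd (1%:M - \sum_(i < h) (A i *t X i)).

Definition LMIbounded {h d : nat} (A : 'I_h -> 'M[C]_d) : Prop :=
  exists c : C, forall (n : nat) (X : 'I_h -> 'M[C]_n),
    LMIdom A n X -> psd (c%:M - \sum_(i < h) (X i *m X i)).

Definition conj_closed2 {h d : nat} (A : 'I_h -> 'M[C]_d) : Prop :=
  forall X : 'I_h -> 'M[C]_2,
    LMIdom A 2 X -> LMIdom A 2 (fun i => map_mx (@Num.conj C) (X i)).

Definition concat {g k n : nat} (X : 'I_g -> 'M[C]_n) (Y : 'I_k -> 'M[C]_n)
    : 'I_(g + k) -> 'M[C]_n :=
  fun i => match split i with inl j => X j | inr j => Y j end.

Definition proj {g k : nat} (K : forall n, ('I_(g + k) -> 'M[C]_n) -> Prop)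
    (n : nat) (X : 'I_g -> 'M[C]_n) : Prop :=
  exists Y : 'I_k -> 'M[C]_n, sa_tuple Y /\ K n (concat X Y).

Definition unit_equiv {g p q : nat} (Y : 'I_g -> 'M[C]_p) (X : 'I_g -> 'M[C]_q)
    : Prop :=
  exists U : 'M[C]_(p, q), U *m adj U = 1%:M /\ adj U *m U = 1%:M /\
    forall j, Y j = U *m X j *m adj U.

Definition free_extreme {g : nat} (K : forall n, ('I_g -> 'M[C]_n) -> Prop)
    (n : nat) (X : 'I_g -> 'M[C]_n) : Prop :=
  K n X /\
  forall (m : nat) (ns : 'I_m -> nat) (Xs : forall i, 'I_g -> 'M[C]_(ns i))
         (V : forall i, 'M[C]_(ns i, n)),
    (forall i, K (ns i) (Xs i)) ->
    (forall i, V i != 0) ->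
    \sum_(i < m) (adj (V i) *m V i) = 1%:M ->
    (forall j, X j = \sum_(i < m) (adj (V i) *m Xs i j *m V i)) ->
    forall i, unit_equiv (Xs i) X \/
      exists (p : nat) (Z : 'I_g -> 'M[C]_p), K p Z /\
        unit_equiv (Xs i) (fun j => block_mx (X j) 0 0 (Z j)).

(* Euclidean extreme point of a set S of level-1 g-tuples (a subset of R^g,
   identifying self-adjoint 1x1 matrices with reals) *)
Definition euclid_extreme {g : nat} (S : ('I_g -> 'M[C]_1) -> Prop)
    (X : 'I_g -> 'M[C]_1) : Prop :=
  S X /\ forall (Y Z : 'I_g -> 'M[C]_1) (t : C),
    S Y -> S Z -> 0 < t < 1 ->
    (forall j, X j = t *: Y j + (1 - t) *: Z j) ->
    forall j, Y j = X j /\ Z j = X j.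

End Defs.

Arguments adj {R p q} M.
Arguments herm {R n} M.
Arguments psd {R n} M.
Arguments sa_tuple {R k n} X.
Arguments LMIbounded {R h d} A.
Arguments conj_closed2 {R h d} A.
Arguments concat {R g k n} X Y _.
Arguments unit_equiv {R g p q} Y X.
Arguments euclid_extreme {R g} S X.
Arguments LMIdom {R h d} A n X.
Arguments proj {R g k} K n X.
Arguments free_extreme {R g} K n X.

From mathcomp Require Import all_boot all_order all_algebra.
From mathcomp Require Import complex mxtens reals spectral.
From mathcomp Require Import ring.

(* Let X = sum_i V_i^* X^(i) V_i be a matrix convex combination. Normalizing
   the columns V_i = sqrt(a_i) u_i writes X as a convex combination, with
   positive weights a_i, of the compressions u_i^* X^(i) u_i, which lie in
   P_g D_A(1); Euclidean extremality forces all of them to equal X. It then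
   suffices to show w^* X^(i) u_i = 0 for every unit vector w orthogonal to
   u_i, since completing u_i to a unitary exhibits X^(i) as X (+) Z.
   Compress a lift of X^(i) to span(u_i, w) and average it with its complex
   conjugate, which stays in D_A(2) by hypothesis: the result is a point of
   D_A(2) with diagonal entry (a lift of) X and real off-diagonal entry
   r = Re (w^* X^(i) u_i). The kernel of the psd diagonal block of the LMI at
   this point is contained in that of the off-diagonal block, so X +- e r
   stays in P_g D_A(1) for some e > 0 and extremality gives r = 0; replacing
   w by -i w kills the imaginary part. *)

Set Implicit Arguments.
Unset Strict Implicit.
Unset Printing Implicit Defensive.
Import Order.TTheory GRing.Theory Num.Theory.
Local Open Scope ring_scope.

Section FreeExtreme.
Context {R : realType}.
Local Notation C := (R[i]).

Lemma adjK {p q} (M : 'M[C]_(p, q)) : adj (adj M) = M.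
Proof. exact: trmxCK. Qed.

Lemma adjM {p q r} (M : 'M[C]_(p, q)) (N : 'M[C]_(q, r)) :
  adj (M *m N) = adj N *m adj M.
Proof. by rewrite /adj trmx_mul map_mxM. Qed.

Lemma adjD {p q} (M N : 'M[C]_(p, q)) : adj (M + N) = adj M + adj N.
Proof. by rewrite /adj linearD map_mxD. Qed.

Lemma adjN {p q} (M : 'M[C]_(p, q)) : adj (- M) = - adj M.
Proof. by rewrite /adj linearN map_mxN. Qed.

Lemma adj_scale {p q} (c : C) (M : 'M[C]_(p, q)) : adj (c *: M) = c^* *: adj M.
Proof. by rewrite /adj linearZ map_mxZ. Qed.

Lemma adj0 {p q} : adj (0 : 'M[C]_(p, q)) = 0.
Proof. by rewrite /adj linear0 map_mx0. Qed.

Lemma adj_id {p} : adj (1%:M : 'M[C]_p) = 1%:M.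
Proof. by rewrite /adj tr_scalar_mx map_mx1. Qed.

Lemma adj_sum {p q} (I : finType) (F : I -> 'M[C]_(p, q)) :
  adj (\sum_i F i) = \sum_i adj (F i).
Proof. by rewrite /adj linear_sum raddf_sum. Qed.

Lemma adj_tens {m n p q} (M : 'M[C]_(m, n)) (N : 'M[C]_(p, q)) :
  adj (M *t N) = adj M *t adj N.
Proof. by rewrite /adj trmx_tens map_mxT. Qed.

Lemma adj_row_mx {p q1 q2} (M : 'M[C]_(p, q1)) (N : 'M[C]_(p, q2)) :
  adj (row_mx M N) = col_mx (adj M) (adj N).
Proof. by rewrite /adj tr_row_mx map_col_mx. Qed.

Lemma adj_col_mx {p1 p2 q} (M : 'M[C]_(p1, q)) (N : 'M[C]_(p2, q)) :
  adj (col_mx M N) = row_mx (adj M) (adj N).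
Proof. by rewrite /adj tr_col_mx map_row_mx. Qed.

Lemma adj_mx11 (M : 'M[C]_1) : adj M = map_mx (@Num.conj C) M.
Proof. by apply/matrixP => a b; rewrite (ord1 a) (ord1 b) !mxE. Qed.

Lemma herm_compress {n m} (M : 'M[C]_n) (B : 'M[C]_(n, m)) :
  herm M -> herm (adj B *m M *m B).
Proof. by move=> hM; rewrite /herm !adjM adjK hM mulmxA. Qed.

Lemma herm_realZ {n} {c : C} {M : 'M[C]_n} :
  c \is Num.real -> herm M -> herm (c *: M).
Proof. by move=> /conj_Creal hc hM; rewrite /herm adj_scale hc hM. Qed.

Lemma tensmxDr {m n p q} (M : 'M[C]_(m, n)) (N1 N2 : 'M[C]_(p, q)) :
  M *t (N1 + N2) = M *t N1 + M *t N2.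
Proof. by apply/matrixP=> a b; rewrite !mxE mulrDr. Qed.

Lemma tensmxZr {m n p q} (c : C) (M : 'M[C]_(m, n)) (N : 'M[C]_(p, q)) :
  M *t (c *: N) = c *: (M *t N).
Proof. by apply/matrixP=> a b; rewrite !mxE mulrCA. Qed.

Lemma tensmx_sumr {m n p q} (I : finType) (M : 'M[C]_(m, n))
    (F : I -> 'M[C]_(p, q)) :
  M *t (\sum_i F i) = \sum_i M *t F i.
Proof.
apply/matrixP=> a b; rewrite !mxE !summxE mulr_sumr.
by apply: eq_bigr => c _; rewrite !mxE.
Qed.

Lemma tensmx_id {m p} : (1%:M : 'M[C]_m) *t (1%:M : 'M[C]_p) = 1%:M.
Proof.
apply/matrixP=> a b.
case: (mxtens_indexP a) => a1 a2; case: (mxtens_indexP b) => b1 b2.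
rewrite tensmxE !mxE (inj_eq (can_inj (@mxtens_indexK m p))) xpair_eqE.
by case: (a1 == b1); case: (a2 == b2); rewrite ?mulr1 ?mul0r ?mulr0.
Qed.

Definition qf {n} (M : 'M[C]_n) (v : 'cV[C]_n) : C := (adj v *m M *m v) 0 0.

Lemma qf_mul {n m} (M : 'M[C]_n) (B : 'M[C]_(n, m)) v :
  qf M (B *m v) = qf (adj B *m M *m B) v.
Proof. by rewrite /qf adjM !mulmxA. Qed.

Lemma qfD {n} (M N : 'M[C]_n) v : qf (M + N) v = qf M v + qf N v.
Proof. by rewrite /qf mulmxDr mulmxDl mxE. Qed.

Lemma qfZ {n} c (M : 'M[C]_n) v : qf (c *: M) v = c * qf M v.
Proof. by rewrite /qf -scalemxAr -scalemxAl mxE. Qed.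

Lemma qf_sum {n} (I : finType) (F : I -> 'M[C]_n) v :
  qf (\sum_i F i) v = \sum_i qf (F i) v.
Proof. by rewrite /qf mulmx_sumr mulmx_suml summxE. Qed.

Lemma qf_subZ {n} (P : 'M[C]_n) u w t :
  qf P (u - t *: w) = qf P u - t * (adj u *m P *m w) 0 0
    - t^* * (adj w *m P *m u) 0 0 + t^* * t * qf P w.
Proof.
rewrite /qf adjD adjN adj_scale !(mulmxBl, mulmxBr) -!scalemxAl -!scalemxAr.
move: (adj u *m P *m u) (adj u *m P *m w) (adj w *m P *m u) (adj w *m P *m w).
by move=> uPu uPw wPu wPw; rewrite !mxE; ring.
Qed.

Lemma qf_real {n} (M : 'M[C]_n) v : herm M -> qf M v \is Num.real.
Proof.
move=> hM; rewrite CrealE /qf; set x := adj v *m M *m v.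
have -> : (x 0 0)^* = adj x 0 0 by rewrite !mxE.
by rewrite /x !adjM adjK hM mulmxA.
Qed.

Lemma qf1E {n} (v : 'cV[C]_n) : qf 1%:M v = \sum_a `|v a 0| ^+ 2.
Proof.
by rewrite /qf mulmx1 mxE; apply: eq_bigr => a _; rewrite !mxE normCKC.
Qed.

Lemma qf1_ge0 {n} (v : 'cV[C]_n) : 0 <= qf 1%:M v.
Proof. by rewrite qf1E sumr_ge0 // => a _; rewrite exprn_ge0. Qed.

Lemma qf1_eq0 {n} (v : 'cV[C]_n) : qf 1%:M v = 0 -> v = 0.
Proof.
rewrite qf1E => /psumr_eq0P v0; apply/matrixP => a b; rewrite (ord1 b) mxE.
have /eqP := v0 (fun i _ => exprn_ge0 _ (normr_ge0 _)) a isT.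
by rewrite expf_eq0 /= normr_eq0 => /eqP.
Qed.

Lemma qf1_gt0 {n} (v : 'cV[C]_n) : v != 0 -> 0 < qf 1%:M v.
Proof.
move=> v_neq0; rewrite lt_def qf1_ge0 andbT.
by apply: contra v_neq0 => /eqP/qf1_eq0->.
Qed.

Lemma sqr_norm_le_qf1 {n} (v : 'cV[C]_n) a : `|v a 0| ^+ 2 <= qf 1%:M v.
Proof.
by rewrite qf1E (bigD1 a) //= lerDl sumr_ge0 // => b _; rewrite exprn_ge0.
Qed.

Lemma mul_le_sqrD {x y : C} : 0 <= x -> 0 <= y -> x * y <= x ^+ 2 + y ^+ 2.
Proof.
move=> x0 y0; case/orP: (real_leVge (ger0_real x0) (ger0_real y0)) => hxy.
- by apply: (le_trans (ler_wpM2r y0 hxy)); rewrite -expr2 lerDr exprn_ge0.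
- by apply: (le_trans (ler_wpM2l x0 hxy)); rewrite -expr2 lerDl exprn_ge0.
Qed.

Lemma qf_bounded {n} (M : 'M[C]_n) :
  exists2 c, 0 <= c & forall v, `|qf M v| <= c * qf 1%:M v.
Proof.
exists (\sum_b \sum_a 2 * `|M a b|).
  by rewrite !sumr_ge0 // => b _; rewrite sumr_ge0 // => a _; rewrite mulr_ge0.
move=> v; set N := qf 1%:M v; rewrite /qf mxE mulr_suml.
apply: (le_trans (ler_norm_sum _ _ _)); apply: ler_sum => b _.
rewrite mxE mulr_suml; apply: (le_trans (ler_norm_sum _ _ _)).
rewrite mulr_suml; apply: ler_sum => a _; rewrite !mxE !normrM norm_conjC.
have -> : `|v a 0| * `|M a b| * `|v b 0| = `|M a b| * (`|v a 0| * `|v b 0|).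
  by ring.
rewrite -mulrA [X in _ <= X]mulrCA ler_wpM2l //.
apply: (le_trans (mul_le_sqrD (normr_ge0 _) (normr_ge0 _) : _ <= _)).
by rewrite mulr_natl mulr2n lerD ?sqr_norm_le_qf1.
Qed.

Lemma psd_compress {n m} (M : 'M[C]_n) (B : 'M[C]_(n, m)) :
  psd M -> psd (adj B *m M *m B).
Proof.
move=> [hM pM]; split; first exact: herm_compress.
by move=> v; rewrite -/(qf _ v) -qf_mul; apply: pM.
Qed.

Lemma psd_sum {n} (I : finType) (F : I -> 'M[C]_n) :
  (forall i, psd (F i)) -> psd (\sum_i F i).
Proof.
move=> pF; split.
  by rewrite /herm adj_sum; apply: eq_bigr => i _; case: (pF i).
move=> v; rewrite -/(qf _ v) qf_sum sumr_ge0 // => i _.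
by case: (pF i) => _ /(_ v).
Qed.

Lemma psdZ {n} c (M : 'M[C]_n) : 0 <= c -> psd M -> psd (c *: M).
Proof.
move=> c0 [hM pM]; split; first exact: herm_realZ (ger0_real c0) hM.
by move=> v; rewrite -/(qf _ v) qfZ mulr_ge0 ?pM.
Qed.

Lemma psdD {n} (M N : 'M[C]_n) : psd M -> psd N -> psd (M + N).
Proof.
move=> [hM pM] [hN pN]; split; first by rewrite /herm adjD hM hN.
by move=> v; rewrite -/(qf _ v) qfD addr_ge0 ?pM ?pN.
Qed.

(* Expand [0 <= qf P (u - t P u)] for [t = 1 / (c + 1)], where [c] bounds
   [qf P] by the squared norm. *)
Lemma qf1_mul_psd_le {n} (P : 'M[C]_n) :
  psd P -> exists2 c, 0 < c & forall u, qf 1%:M (P *m u) <= c * qf P u.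
Proof.
move=> [hP pP]; have [c c_ge0 hc] := qf_bounded P.
have c1_gt0 : 0 < c + 1 by rewrite ltr_wpDl.
exists (c + 1) => // u; set w := P *m u; set t := (c + 1)^-1.
have t_gt0 : 0 < t by rewrite invr_gt0.
have tc_le1 : t * c <= 1 by rewrite mulrC ler_pdivrMr // mul1r lerDl.
have adj_w : adj w = adj u *m P by rewrite /w adjM hP.
have uPw : (adj u *m P *m w) 0 0 = qf 1%:M w by rewrite /qf mulmx1 adj_w.
have wPu : (adj w *m P *m u) 0 0 = qf 1%:M w.
  by rewrite /qf mulmx1 adj_w /w !mulmxA.
have := pP (u - t *: w); rewrite -/(qf _ _) qf_subZ uPw wPu.
rewrite conj_Creal ?gtr0_real //.
set q := qf P u; set s := qf 1%:M w; set r := qf P w.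
have ttr_le : t * t * r <= t * s.
  rewrite -mulrA; apply: ler_wpM2l; first exact: ltW.
  have r_le : r <= c * s := le_trans (real_ler_norm (ger0_real (pP w))) (hc w).
  apply: (le_trans (ler_wpM2l (ltW t_gt0) r_le)).
  by rewrite mulrA ler_piMl ?qf1_ge0.
move=> h; have ts_le : t * s <= q.
  rewrite -subr_ge0; apply: (le_trans h).
  have -> : q - t * s - t * s + t * t * r = q - t * s + (t * t * r - t * s).
    by ring.
  by rewrite gerDl subr_le0.
by rewrite -ler_pdivrMl // -/t.
Qed.

Lemma psd_qf_eq0 {n} (P : 'M[C]_n) u : psd P -> qf P u = 0 -> P *m u = 0.
Proof.
move=> pP qPu0; have [c c_gt0 hc] := qf1_mul_psd_le pP.
apply: qf1_eq0; apply/eqP; rewrite eq_le qf1_ge0 andbT.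
by have := hc u; rewrite qPu0 mulr0.
Qed.

Lemma psd_compress_ker {n m p} (M : 'M[C]_n) (B : 'M[C]_(n, m))
    (E : 'M[C]_(n, p)) (x : 'cV[C]_m) :
  psd M -> (adj B *m M *m B) *m x = 0 -> (adj E *m M *m B) *m x = 0.
Proof.
move=> pM hx; have /psd_qf_eq0 MBx0 : qf M (B *m x) = 0.
  by rewrite qf_mul /qf -mulmxA hx mulmx0 mxE.
by rewrite -!mulmxA MBx0 // mulmx0.
Qed.

Section Domination.
Variables (n : nat) (P H : 'M[C]_n).
Hypotheses (pP : psd P) (hH : herm H).
Hypothesis kerPH : forall x : 'cV[C]_n, P *m x = 0 -> H *m x = 0.

Lemma herm_factor_psd : exists M, H = P *m M *m P.
Proof.
have HK : H *m cokermx P = 0.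
  apply/matrixP => a j; have := @kerPH (cokermx P *m delta_mx j 0).
  rewrite mulmxA (mulmx_coker P) mul0mx mulmxA -colE => /(_ erefl).
  by move=> /colP /(_ a); rewrite !mxE.
have HGP : H *m pinvmx P *m P = H by apply: mulmxKpV; rewrite submxE HK.
have PGH : P *m adj (pinvmx P) *m H = H.
  by case: pP => hP _; have := congr1 adj HGP; rewrite !adjM hH hP mulmxA.
exists (adj (pinvmx P) *m H *m pinvmx P).
by rewrite -{1}HGP -{1}PGH !mulmxA.
Qed.

Lemma qf_dominated : exists2 K, 0 <= K & forall u, `|qf H u| <= K * qf P u.
Proof.
have [M ->] := herm_factor_psd.
have [c1 c1_ge0 hc1] := qf_bounded M.
have [c2 c2_gt0 hc2] := qf1_mul_psd_le pP.
exists (c1 * c2); first by rewrite mulr_ge0 // ltW.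
case: pP => hP _ u; rewrite -{1}hP -qf_mul -mulrA.
exact: le_trans (hc1 _) (ler_wpM2l c1_ge0 (hc2 u)).
Qed.

Lemma psd_perturb : exists2 e, 0 < e & psd (P + e *: H) /\ psd (P - e *: H).
Proof.
have [K K_ge0 hK] := qf_dominated; case: pP => hP qP.
set e := (K + 1)^-1; have e_gt0 : 0 < e by rewrite invr_gt0 ltr_wpDl.
suff psd_sH s : s \is Num.real -> `|s| <= e -> psd (P + s *: H).
  have e_real := gtr0_real e_gt0.
  exists e; first exact: e_gt0.
  by rewrite -scaleNr; split; apply: psd_sH; rewrite ?rpredN ?normrN ?gtr0_norm.
move=> s_real s_le; split.
  by rewrite /herm adjD hP; congr (_ + _); apply: herm_realZ.
move=> u; rewrite -/(qf _ u) qfD qfZ -[X in 0 <= _ + X]opprK subr_ge0.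
apply: (le_trans (real_ler_norm _)); first by rewrite rpredN rpredM ?qf_real.
rewrite normrN normrM -[X in _ <= X]mul1r.
apply: (le_trans (ler_wpM2l (normr_ge0 _) (hK u))).
rewrite mulrA; apply: ler_wpM2r; first exact: qP.
apply: (le_trans (ler_wpM2r K_ge0 s_le)).
by rewrite mulrC ler_pdivrMr ?ltr_wpDl // mul1r lerDl.
Qed.

End Domination.

Section Pencil.
Variables (h d : nat) (A : 'I_h -> 'M[C]_d).

Definition pencil {n} (Z : 'I_h -> 'M[C]_n) : 'M[C]_(d * n) :=
  \sum_(i < h) (A i *t Z i).

Lemma LMIdomE {n} (Z : 'I_h -> 'M[C]_n) :
  LMIdom A n Z = (sa_tuple Z /\ psd (1%:M - pencil Z)).
Proof. by []. Qed.

Lemma eq_pencil {n} (Z Z' : 'I_h -> 'M[C]_n) :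
  (forall i, Z i = Z' i) -> pencil Z = pencil Z'.
Proof. by move=> eqZ; apply: eq_bigr => i _; rewrite eqZ. Qed.

Lemma eq_LMIdom {n} (Z Z' : 'I_h -> 'M[C]_n) :
  (forall i, Z i = Z' i) -> LMIdom A n Z -> LMIdom A n Z'.
Proof.
move=> eqZ; rewrite !LMIdomE (eq_pencil eqZ) => -[hZ pZ]; split => //.
by move=> i; rewrite -eqZ.
Qed.

Lemma pencilD {n} (Z1 Z2 : 'I_h -> 'M[C]_n) :
  pencil (fun i => Z1 i + Z2 i) = pencil Z1 + pencil Z2.
Proof.
by rewrite /pencil -big_split; apply: eq_bigr => i _; rewrite tensmxDr.
Qed.

Lemma pencilB {n} (Z1 Z2 : 'I_h -> 'M[C]_n) :
  pencil (fun i => Z1 i - Z2 i) = pencil Z1 - pencil Z2.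
Proof.
rewrite /pencil -sumrB; apply: eq_bigr => i _.
by rewrite -scaleN1r tensmxDr tensmxZr scaleN1r.
Qed.

Lemma pencilZ {n} c (Z : 'I_h -> 'M[C]_n) :
  pencil (fun i => c *: Z i) = c *: pencil Z.
Proof.
by rewrite /pencil scaler_sumr; apply: eq_bigr => i _; rewrite tensmxZr.
Qed.

Lemma pencil_sum {n} (I : finType) (F : I -> 'I_h -> 'M[C]_n) :
  pencil (fun l => \sum_i F i l) = \sum_i pencil (F i).
Proof.
by rewrite /pencil exchange_big; apply: eq_bigr => l _; rewrite tensmx_sumr.
Qed.

Lemma pencil_compress {n m} (Z : 'I_h -> 'M[C]_n) (W : 'M[C]_(m, n))
    (W' : 'M[C]_(n, m)) :
  (1%:M *t W) *m pencil Z *m (1%:M *t W') = pencil (fun i => W *m Z i *m W').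
Proof.
rewrite /pencil mulmx_sumr mulmx_suml; apply: eq_bigr => i _.
by rewrite !tensmx_mul mul1mx mulmx1.
Qed.

Lemma pencil_compress_sub {n m} (Z : 'I_h -> 'M[C]_n) (W W' : 'M[C]_(n, m)) :
  adj (1%:M *t W) *m (1%:M - pencil Z) *m (1%:M *t W') =
  1%:M *t (adj W *m W') - pencil (fun l => adj W *m Z l *m W').
Proof.
rewrite adj_tens adj_id mulmxBr mulmxBl mulmx1 tensmx_mul mulmx1.
by rewrite pencil_compress.
Qed.

Lemma LMIdom_compress {n m} (Z : 'I_h -> 'M[C]_n) (W : 'M[C]_(n, m)) :
  adj W *m W = 1%:M -> LMIdom A n Z -> LMIdom A m (fun i => adj W *m Z i *m W).
Proof.
move=> isoW [hZ pZ]; split; first by move=> i; apply: herm_compress.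
have := psd_compress (1%:M *t W) pZ.
by rewrite pencil_compress_sub isoW tensmx_id.
Qed.

Lemma LMIdom_convex {m n} (c : 'I_m -> C) (Zs : 'I_m -> 'I_h -> 'M[C]_n) :
  (forall i, 0 <= c i) -> \sum_i c i = 1 -> (forall i, LMIdom A n (Zs i)) ->
  LMIdom A n (fun l => \sum_i c i *: Zs i l).
Proof.
move=> c_ge0 c_sum hZs; rewrite LMIdomE; split.
  move=> l; rewrite /herm adj_sum; apply: eq_bigr => i _.
  by apply: herm_realZ (ger0_real (c_ge0 i)) _; case: (hZs i).
rewrite pencil_sum.
have -> : 1%:M - \sum_i pencil (fun l => c i *: Zs i l) =
          \sum_i c i *: (1%:M - pencil (Zs i)).
  rewrite -[1%:M in LHS]scale1r -c_sum scaler_suml -sumrB.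
  by apply: eq_bigr => i _; rewrite pencilZ scalerBr.
by apply: psd_sum => i; apply: psdZ => //; case: (hZs i).
Qed.

Lemma LMIdom_midpoint {n} (Z1 Z2 : 'I_h -> 'M[C]_n) :
  LMIdom A n Z1 -> LMIdom A n Z2 ->
  LMIdom A n (fun l => 2^-1 *: (Z1 l + Z2 l)).
Proof.
rewrite !LMIdomE => -[hZ1 pZ1] [hZ2 pZ2].
have half_ge0 : (0 : C) <= 2^-1 by rewrite invr_ge0.
split=> [l|]; first by apply: herm_realZ (ger0_real half_ge0) _;
  rewrite /herm adjD hZ1 hZ2.
rewrite pencilZ pencilD.
have -> : 1%:M - 2^-1 *: (pencil Z1 + pencil Z2) =
          2^-1 *: (1%:M - pencil Z1) + 2^-1 *: (1%:M - pencil Z2).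
  rewrite !scalerBr addrACA -opprD -scalerDl -scalerDr.
  have -> : (2^-1 : C) + 2^-1 = 1 by field.
  by rewrite scale1r.
by apply: psdD; apply: psdZ.
Qed.

Hypothesis hA : forall i, herm (A i).

Lemma herm_pencil {n} (Z : 'I_h -> 'M[C]_n) : sa_tuple Z -> herm (pencil Z).
Proof.
move=> hZ; rewrite /herm /pencil adj_sum; apply: eq_bigr => i _.
by rewrite adj_tens hA hZ.
Qed.

(* Compressing the psd matrix [1 - pencil Z] by [1 *t u] and [1 *t w] gives
   the diagonal block [1 - pencil p] and the off-diagonal block [- pencil r];
   the latter vanishes on the kernel of the former. *)
Lemma LMIdom_offdiag_perturb {n} (Z : 'I_h -> 'M[C]_n) (u w : 'cV[C]_n) :
  LMIdom A n Z -> adj u *m u = 1%:M -> adj w *m w = 1%:M -> adj w *m u = 0 ->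
  (forall l, herm (adj w *m Z l *m u)) ->
  exists2 e, 0 < e &
    LMIdom A 1 (fun l => adj u *m Z l *m u + e *: (adj w *m Z l *m u)) /\
    LMIdom A 1 (fun l => adj u *m Z l *m u - e *: (adj w *m Z l *m u)).
Proof.
move=> hZ isou isow wu hr; set p := fun l => adj u *m Z l *m u.
set r := fun l => adj w *m Z l *m u.
have [hp pP] : LMIdom A 1 p := LMIdom_compress isou hZ.
have P_eq : adj (1%:M *t u) *m (1%:M - pencil Z) *m (1%:M *t u) =
    1%:M - pencil p by rewrite pencil_compress_sub isou tensmx_id.
have H_eq : adj (1%:M *t w) *m (1%:M - pencil Z) *m (1%:M *t u) =
    - pencil r by rewrite pencil_compress_sub wu tensmx0 sub0r.
have ker_incl (x : 'cV[C]_(d * 1)) :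
    (1%:M - pencil p) *m x = 0 -> pencil r *m x = 0.
  move=> Px0; apply/eqP; rewrite -oppr_eq0 -mulNmx -H_eq; apply/eqP.
  move: (hZ); rewrite LMIdomE => -[_ pZ].
  by apply: (psd_compress_ker _ pZ); rewrite P_eq.
have [e e_gt0 [pPp pPm]] := psd_perturb pP (herm_pencil hr) ker_incl.
have e_real : e \is Num.real := gtr0_real e_gt0.
exists e; first exact: e_gt0.
split; rewrite LMIdomE; split => [l|].
- by rewrite /herm adjD hp (herm_realZ e_real (hr l)).
- by rewrite pencilD pencilZ opprD addrA; exact: pPm.
- by rewrite /herm adjD adjN hp (herm_realZ e_real (hr l)).
- by rewrite pencilB pencilZ opprD opprK addrA; exact: pPp.
Qed.

End Pencil.

Section EuclidExtreme.
Variables (g : nat) (S : ('I_g -> 'M[C]_1) -> Prop) (X : 'I_g -> 'M[C]_1).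
Hypothesis extX : euclid_extreme S X.

Lemma euclid_extreme_sym (e : C) (y : 'I_g -> 'M[C]_1) :
  0 < e -> S (fun j => X j + e *: y j) -> S (fun j => X j - e *: y j) ->
  forall j, y j = 0.
Proof.
move=> e_gt0 SXp SXm j; have half_in01 : 0 < (2^-1 : C) < 1.
  by rewrite invr_gt0 ltr0n invf_lt1 ?ltr0n ?ltr1n.
have Xmid l : X l = 2^-1 *: (X l + e *: y l) + (1 - 2^-1) *: (X l - e *: y l).
  have -> : (1 : C) - 2^-1 = 2^-1 by field.
  rewrite -scalerDr addrACA subrr addr0 scalerDr -scalerDl.
  have -> : (2^-1 : C) + 2^-1 = 1 by field.
  by rewrite scale1r.
have [+ _] := extX.2 _ _ _ SXp SXm half_in01 Xmid j.
move=> /eqP; rewrite -subr_eq0 addrAC subrr add0r scaler_eq0 (gt_eqF e_gt0).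
by move=> /eqP.
Qed.

Hypothesis S_convex : forall m (c : 'I_m -> C) (y : 'I_m -> 'I_g -> 'M[C]_1),
  (forall i, 0 <= c i) -> \sum_i c i = 1 -> (forall i, S (y i)) ->
  S (fun j => \sum_i c i *: y i j).

(* Split off the term [i0]: [X = t y_i0 + (1 - t) z] with [z] the
   renormalized convex combination of the other terms. *)
Lemma euclid_extreme_convex_comb m (a : 'I_m -> C)
    (y : 'I_m -> 'I_g -> 'M[C]_1) :
  (forall i, 0 < a i) -> \sum_i a i = 1 -> (forall i, S (y i)) ->
  (forall j, X j = \sum_i a i *: y i j) -> forall i j, y i j = X j.
Proof.
move=> a_gt0 a_sum Sy Xcomb i0; set t := a i0.
have a_split : \sum_(i | i != i0) a i = 1 - t.
  by rewrite -a_sum [in RHS](bigD1 i0) //= addrAC subrr add0r.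
have [t1|t_neq1] := eqVneq t 1.
  have others_void i : i != i0 -> False.
    move=> ii0; have := a_split; rewrite t1 subrr => /eqP.
    rewrite psumr_eq0 => [/allP/(_ i (mem_index_enum i))|i' _]; last exact: ltW.
    by rewrite ii0 (gt_eqF (a_gt0 i)).
  move=> j; rewrite Xcomb (bigD1 i0) //= big1 ?addr0 -/t ?t1 ?scale1r //.
  by move=> i /others_void.
have t_in01 : 0 < t < 1.
  rewrite a_gt0 lt_neqAle t_neq1 -subr_ge0 -a_split.
  by rewrite sumr_ge0 // => i _; apply: ltW.
have t1_neq0 : 1 - t != 0 by rewrite subr_eq0 eq_sym.
pose c i := if i == i0 then 0 else a i / (1 - t).
have c_ge0 i : 0 <= c i.
  rewrite /c; case: eqP => // _.
  by rewrite divr_ge0 ?ltW // subr_gt0; case/andP: t_in01.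
have c_sum : \sum_i c i = 1.
  rewrite (bigD1 i0) //= {1}/c eqxx add0r -[RHS](divff t1_neq0) -{1}a_split.
  by rewrite mulr_suml; apply: eq_bigr => i /negbTE ii0; rewrite /c ii0.
have Xt j : X j = t *: y i0 j + (1 - t) *: (\sum_i c i *: y i j).
  rewrite Xcomb (bigD1 i0) //=; congr (_ + _).
  rewrite scaler_sumr [RHS](bigD1 i0) //= /c /= eqxx scale0r scaler0 add0r.
  apply: eq_bigr => i /negbTE ii0.
  by rewrite ii0 scalerA mulrCA divff // mulr1.
move=> j; have Sz := S_convex c_ge0 c_sum Sy.
by case: (extX.2 _ _ t (Sy i0) Sz t_in01 Xt j).
Qed.

End EuclidExtreme.

Definition remx {m n} (M : 'M[C]_(m, n)) : 'M[C]_(m, n) :=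
  2^-1 *: (M + map_mx (@Num.conj C) M).

Lemma remx_block {m1 m2 n1 n2} (Mul : 'M[C]_(m1, n1)) (Mur : 'M[C]_(m1, n2))
    (Mdl : 'M[C]_(m2, n1)) (Mdr : 'M[C]_(m2, n2)) :
  remx (block_mx Mul Mur Mdl Mdr) =
  block_mx (remx Mul) (remx Mur) (remx Mdl) (remx Mdr).
Proof. by rewrite /remx map_block_mx add_block_mx scale_block_mx. Qed.

Lemma herm_remx (M : 'M[C]_1) : herm (remx M).
Proof.
rewrite /herm /remx adj_scale adjD -adj_mx11 adjK addrC.
by rewrite conj_Creal // rpredV rpred_nat.
Qed.

Lemma remx_herm (M : 'M[C]_1) : herm M -> remx M = M.
Proof.
rewrite /herm adj_mx11 /remx => ->.
by rewrite scalerDr -scalerDl -[2^-1]mul1r -splitr scale1r.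
Qed.

Lemma remx_eq0 (M : 'M[C]_1) : remx M = 0 -> remx ('i *: M) = 0 -> M = 0.
Proof.
move=> /matrixP/(_ 0 0) + /matrixP/(_ 0 0); rewrite !mxE rmorphM /= conjCi.
set z := M 0 0; have half_neq0 : (2^-1 : C) != 0 by rewrite invr_eq0 pnatr_eq0.
move=> /eqP + /eqP; rewrite !mulf_eq0 (negbTE half_neq0) /= => /eqP zRe.
rewrite mulNr -mulrBr mulf_eq0 (negbTE (neq0Ci C)) /= => /eqP zIm.
have /eqP : z *+ 2 = 0 by rewrite -[RHS](addr0 0) -{1}zRe -zIm; ring.
rewrite mulrn_eq0 /= => /eqP z0.
by apply/matrixP => a b; rewrite !ord1 [RHS]mxE.
Qed.

Definition e0 : 'cV[C]_(1 + 1) := col_mx 1%:M 0.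
Definition e1 : 'cV[C]_(1 + 1) := col_mx 0 1%:M.

Lemma adj_e0 : adj e0 = row_mx 1%:M 0.
Proof. by rewrite /e0 adj_col_mx adj_id adj0. Qed.

Lemma adj_e1 : adj e1 = row_mx 0 1%:M.
Proof. by rewrite /e1 adj_col_mx adj_id adj0. Qed.

Lemma e0_unit : adj e0 *m e0 = 1%:M.
Proof. by rewrite adj_e0 mul_row_col mulmx1 mulmx0 addr0. Qed.

Lemma e1_unit : adj e1 *m e1 = 1%:M.
Proof. by rewrite adj_e1 mul_row_col mulmx1 mulmx0 add0r. Qed.

Lemma e1_perp_e0 : adj e1 *m e0 = 0.
Proof. by rewrite adj_e1 mul_row_col mulmx1 mulmx0 addr0. Qed.

Lemma compress_e0 (M : 'M[C]_(1 + 1)) : adj e0 *m M *m e0 = ulsubmx M.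
Proof.
rewrite -{1}[M]submxK adj_e0 mul_row_block !mul1mx !mul0mx !addr0 /e0.
by rewrite mul_row_col mulmx1 mulmx0 addr0.
Qed.

Lemma compress_e1e0 (M : 'M[C]_(1 + 1)) : adj e1 *m M *m e0 = dlsubmx M.
Proof.
rewrite -{1}[M]submxK adj_e1 mul_row_block !mul1mx !mul0mx !add0r /e0.
by rewrite mul_row_col mulmx1 mulmx0 addr0.
Qed.

Lemma compress_row_mx {n} (T : 'M[C]_n) (u w : 'cV[C]_n) :
  adj (row_mx u w) *m T *m row_mx u w =
  block_mx (adj u *m T *m u) (adj u *m T *m w)
           (adj w *m T *m u) (adj w *m T *m w).
Proof. by rewrite adj_row_mx mul_col_mx mul_col_row. Qed.

Lemma row_mx_isometry {n} (u w : 'cV[C]_n) :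
  adj u *m u = 1%:M -> adj w *m w = 1%:M -> adj w *m u = 0 ->
  adj (row_mx u w) *m row_mx u w = 1%:M.
Proof.
move=> isou isow wu; have uw : adj u *m w = 0 by rewrite -[w]adjK -adjM wu adj0.
by rewrite adj_row_mx mul_col_row isou isow wu uw -scalar_mx_block.
Qed.

Lemma row_isometry {m n} (M : 'M[C]_(m, n)) a :
  M *m adj M = 1%:M -> row a M *m adj (row a M) = 1%:M.
Proof.
move=> /matrixP/(_ a a); rewrite !mxE eqxx => Maa.
apply/matrixP => x y; rewrite !ord1 !mxE -Maa.
by apply: eq_bigr => b _; rewrite !mxE.
Qed.

(* Gram-Schmidt applied to the square matrix all of whose rows are [u^*]
   gives a unitary matrix whose first row spans [u^*]; its other rows are
   then orthogonal to [u]. *)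
Lemma unitary_completion {n} (u : 'cV[C]_(1 + n)) :
  adj u *m u = 1%:M ->
  exists S2 : 'M[C]_(n, 1 + n),
    col_mx (adj u) S2 *m adj (col_mx (adj u) S2) = 1%:M.
Proof.
move=> isou; set U := \matrix_(a < 1 + n, b < 1 + n) adj u 0 b.
set S := schmidt U; set S1 := usubmx S; set S2 := dsubmx S.
have unitS : S *m adj S = 1%:M by apply/unitarymxP; apply: schmidt_unitarymx.
have [mu u_mu] : exists mu, adj u = mu *: S1.
  apply/sub_rVP; have := row_schmidt_sub U (0 : 'I_(1 + n)).
  rewrite (big_pred1 (0 : 'I_(1 + n))) => [|i]; last first.
    by rewrite /= leqn0 -[RHS]val_eqE.
  rewrite genmxE; congr (_ <= _)%MS; apply/rowP => b; rewrite !mxE //.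
  by congr (S _ b); apply: val_inj.
have [_ S12 _ S22] : [/\ S1 *m adj S1 = 1%:M, S1 *m adj S2 = 0,
                         S2 *m adj S1 = 0 & S2 *m adj S2 = 1%:M].
  move: unitS; rewrite -[S]vsubmxK adj_col_mx mul_col_row.
  by rewrite (scalar_mx_block 1 n) => /eq_block_mx [-> -> -> ->].
have uS2 : adj u *m adj S2 = 0 by rewrite u_mu -scalemxAl S12 scaler0.
have S2u : S2 *m u = 0 by have := congr1 adj uS2; rewrite adjM !adjK adj0.
exists S2; rewrite adj_col_mx mul_col_row adjK isou uS2 S2u S22.
by rewrite -scalar_mx_block.
Qed.

Lemma cV_normalize {n} (v : 'cV[C]_n) :
  v != 0 -> exists2 u, adj u *m u = 1%:M &
    forall M, adj v *m M *m v = (adj v *m v) 0 0 *: (adj u *m M *m u).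
Proof.
move=> v_neq0; set a := (adj v *m v) 0 0.
have a_gt0 : 0 < a by have := qf1_gt0 v_neq0; rewrite /qf mulmx1.
set s := sqrtC a; have s_gt0 : 0 < s by rewrite sqrtC_gt0.
have a_neq0 : a != 0 by rewrite gt_eqF.
have inv_ss : s^-1 * s^-1 = a^-1 by rewrite -invfM -expr2 sqrtCK.
have adj_u : adj (s^-1 *: v) = s^-1 *: adj v.
  by rewrite adj_scale conj_Creal // rpredV gtr0_real.
exists (s^-1 *: v) => [|M]; rewrite adj_u -!scalemxAl -scalemxAr !scalerA.
  by rewrite inv_ss [adj v *m v]mx11_scalar -/a scale_scalar_mx mulVf.
by rewrite -mulrA inv_ss divff // scale1r.
Qed.

Section Projection.
Variables (g k d : nat) (A : 'I_(g + k) -> 'M[C]_d).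

Lemma concat_lshift {n} (X : 'I_g -> 'M[C]_n) (Y : 'I_k -> 'M[C]_n) j :
  concat X Y (lshift k j) = X j.
Proof. by rewrite /concat (unsplitK (inl j : 'I_g + 'I_k)). Qed.

Lemma concat_split {n} (T : 'I_(g + k) -> 'M[C]_n) l :
  concat (fun j => T (lshift k j)) (fun j => T (rshift g j)) l = T l.
Proof. by rewrite /concat; case: splitP => j hj; congr T; apply: val_inj. Qed.

Lemma projP {n} (X : 'I_g -> 'M[C]_n) :
  proj (LMIdom A) n X <->
  exists2 T, LMIdom A n T & forall j, T (lshift k j) = X j.
Proof.
split=> [[Y [_ hT]] | [T hT TX]].
  by exists (concat X Y) => // j; rewrite concat_lshift.
exists (fun j => T (rshift g j)); split; first by move=> j; case: hT.
apply: eq_LMIdom hT => l; rewrite -concat_split /concat.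
by case: (split l) => j //; rewrite TX.
Qed.

Lemma proj_sa_tuple {n} (X : 'I_g -> 'M[C]_n) :
  proj (LMIdom A) n X -> sa_tuple X.
Proof. by case/projP=> T [hT _] TX j; rewrite -TX. Qed.

Lemma proj_compress {n m} (X : 'I_g -> 'M[C]_n) (W : 'M[C]_(n, m)) :
  adj W *m W = 1%:M -> proj (LMIdom A) n X ->
  proj (LMIdom A) m (fun j => adj W *m X j *m W).
Proof.
move=> isoW /projP[T hT TX]; apply/projP.
exists (fun l => adj W *m T l *m W); first exact: LMIdom_compress.
by move=> j; rewrite TX.
Qed.

Lemma proj_convex {m n} (c : 'I_m -> C) (Xs : 'I_m -> 'I_g -> 'M[C]_n) :
  (forall i, 0 <= c i) -> \sum_i c i = 1 ->
  (forall i, proj (LMIdom A) n (Xs i)) ->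
  proj (LMIdom A) n (fun j => \sum_i c i *: Xs i j).
Proof.
move=> c_ge0 c_sum projXs.
have [T hT TXs] := fin_all_exists2 (fun i => (projP (Xs i)).1 (projXs i)).
apply/projP; exists (fun l => \sum_i c i *: T i l); first exact: LMIdom_convex.
by move=> j; apply: eq_bigr => i _; rewrite TXs.
Qed.

Hypotheses (hA : forall i, herm (A i)) (conjA : conj_closed2 A).

Lemma LMIdom_remx (Z : 'I_(g + k) -> 'M[C]_2) :
  LMIdom A 2 Z -> LMIdom A 2 (fun l => remx (Z l)).
Proof. by move=> hZ; apply: LMIdom_midpoint hZ (conjA hZ). Qed.

Variable X : 'I_g -> 'M[C]_1.
Hypothesis extX : euclid_extreme (proj (LMIdom A) 1) X.

Section Compression.
Variables (n : nat) (Y : 'I_g -> 'M[C]_n) (u : 'cV[C]_n).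
Hypotheses (projY : proj (LMIdom A) n Y) (isou : adj u *m u = 1%:M).
Hypothesis uYu : forall j, adj u *m Y j *m u = X j.

Lemma offdiag_remx_eq0 (w : 'cV[C]_n) :
  adj w *m w = 1%:M -> adj w *m u = 0 ->
  forall j, remx (adj w *m Y j *m u) = 0.
Proof.
move=> isow wu; have [T hT TY] := (projP Y).1 projY.
set W := row_mx u w; have isoW : adj W *m W = 1%:M by apply: row_mx_isometry.
set Z := fun l => remx (adj W *m T l *m W).
have hZ : LMIdom A 2 Z by apply/LMIdom_remx/LMIdom_compress.
have Z_ul l : adj e0 *m Z l *m e0 = remx (adj u *m T l *m u).
  by rewrite compress_e0 /Z compress_row_mx remx_block block_mxKul.
have Z_dl l : adj e1 *m Z l *m e0 = remx (adj w *m T l *m u).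
  by rewrite compress_e1e0 /Z compress_row_mx remx_block block_mxKdl.
have [e e_gt0 [hZp hZm]] := LMIdom_offdiag_perturb hA hZ e0_unit e1_unit
  e1_perp_e0 (fun l => eq_ind_r herm (herm_remx _) (Z_dl l)).
have sa_X := proj_sa_tuple extX.1.
apply: (euclid_extreme_sym extX e_gt0); apply/projP.
- exists (fun l => adj e0 *m Z l *m e0 + e *: (adj e1 *m Z l *m e0)).
    exact: hZp.
  by move=> j; rewrite Z_ul Z_dl !TY uYu remx_herm.
- exists (fun l => adj e0 *m Z l *m e0 - e *: (adj e1 *m Z l *m e0)).
    exact: hZm.
  by move=> j; rewrite Z_ul Z_dl !TY uYu remx_herm.
Qed.

Lemma offdiag_eq0 (w : 'cV[C]_n) :
  adj w *m w = 1%:M -> adj w *m u = 0 -> forall j, adj w *m Y j *m u = 0.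
Proof.
move=> isow wu j; set w' := - 'i *: w.
have adj_w' : adj w' = 'i *: adj w.
  by rewrite adj_scale rmorphN /= conjCi opprK.
have isow' : adj w' *m w' = 1%:M.
  rewrite adj_w' -scalemxAl -scalemxAr isow scalerA mulrN -expr2 sqrCi.
  by rewrite opprK scale1r.
have w'u : adj w' *m u = 0 by rewrite adj_w' -scalemxAl wu scaler0.
apply: remx_eq0; first exact: offdiag_remx_eq0.
by rewrite !scalemxAl -adj_w'; apply: offdiag_remx_eq0.
Qed.

End Compression.

Lemma proj_block_unit_equiv {n} (Y : 'I_g -> 'M[C]_n) (u : 'cV[C]_n) :
  proj (LMIdom A) n Y -> adj u *m u = 1%:M ->
  (forall j, adj u *m Y j *m u = X j) ->
  exists p (Z : 'I_g -> 'M[C]_p), proj (LMIdom A) p Z /\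
    unit_equiv Y (fun j => block_mx (X j) 0 0 (Z j)).
Proof.
case: n Y u => [|n] Y u projY isou uYu.
  move/matrixP/(_ 0 0): isou; rewrite !mxE big_ord0 eqxx => /eqP.
  by rewrite eq_sym oner_eq0.
have [S2 unitS] := unitary_completion isou; set S := col_mx (adj u) S2 in unitS.
have [_ _ S2u S2S2] : [/\ adj u *m u = 1%:M, adj u *m adj S2 = 0,
                         S2 *m u = 0 & S2 *m adj S2 = 1%:M].
  move: unitS; rewrite adj_col_mx mul_col_row adjK (scalar_mx_block 1 n).
  by move=> /eq_block_mx [-> -> -> ->].
have S2Yu j : S2 *m Y j *m u = 0.
  apply/row_matrixP => a; rewrite row0 !row_mul.
  rewrite -[row a S2]adjK; apply: (offdiag_eq0 projY isou uYu).
    by rewrite adjK row_isometry.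
  by rewrite adjK -row_mul S2u row0.
have uYS2 j : adj u *m Y j *m adj S2 = 0.
  have := congr1 adj (S2Yu j).
  by rewrite !adjM (proj_sa_tuple projY) adj0 mulmxA.
exists n, (fun j => S2 *m Y j *m adj S2); split.
  have isoS2 : adj (adj S2) *m adj S2 = 1%:M by rewrite adjK.
  by have := proj_compress isoS2 projY; rewrite adjK.
have SS : adj S *m S = 1%:M := mulmx1C unitS.
exists (adj S); split; first by rewrite adjK.
split=> [|j]; first by rewrite adjK.
have -> : block_mx (X j) 0 0 (S2 *m Y j *m adj S2) = S *m Y j *m adj S.
  by rewrite adj_col_mx mul_col_mx mul_col_row adjK uYu uYS2 S2Yu.
by rewrite adjK !mulmxA SS mul1mx -mulmxA SS mulmx1.
Qed.

End Projection.

End FreeExtreme.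

Theorem mainTheorem11 (R : realType) (g k d : nat)
    (A : 'I_(g + k) -> 'M[R[i]]_d) :
  (forall i, herm (A i)) ->
  LMIbounded A ->
  conj_closed2 A ->
  forall X : 'I_g -> 'M[R[i]]_1,
    euclid_extreme (proj (LMIdom A) 1) X ->
    free_extreme (proj (LMIdom A)) 1 X.
Proof.
move=> hA _ conjA X extX; split=> [|m ns Xs V projXs V_neq0 sumV Xdec i].
  exact: extX.1.
right; pose a j := (adj (V j) *m V j) 0 0.
have a_gt0 j : 0 < a j by have := qf1_gt0 (V_neq0 j); rewrite /qf mulmx1.
have a_sum : \sum_j a j = 1.
  by have := congr1 (fun M : 'M[R[i]]_1 => M 0 0) sumV; rewrite summxE mxE.
have [u isou Vu] := fin_all_exists2 (fun j => cV_normalize (V_neq0 j)).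
have Xcomb l : X l = \sum_j a j *: (adj (u j) *m Xs j l *m u j).
  by rewrite Xdec; apply: eq_bigr => j _; rewrite Vu.
have S_convex m' c y := @proj_convex R g k d A m' 1 c y.
have uXu : forall l, adj (u i) *m Xs i l *m u i = X l :=
  euclid_extreme_convex_comb extX S_convex a_gt0 a_sum
    (fun j => proj_compress (isou j) (projXs j)) Xcomb i.
have [p [Z [projZ equivZ]]] :=
  proj_block_unit_equiv hA conjA extX (projXs i) (isou i) uXu.
by exists p, Z.
Qed.
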